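(* Let $\boldsymbol{\theta}$ be a parameter with real-valued treatment effect $\theta=\theta(\boldsymbol{\theta})$, $\delta\in\mathbb{R}$, $c\in(0,1)$, $\mathcal{E}=\{\theta>\delta\}$, $\bar{\mathcal{E}}=\{\theta\le\delta\}$. Let $\pi_{\mathrm{a}}$ and $\pi_{\mathrm{d}}$ be priors on $\boldsymbol{\theta}$ each giving positive probability to $\mathcal{E}$ and $\bar{\mathcal{E}}$, with $\pi_{\mathrm{a}}(\boldsymbol{\theta}\mid\mathcal{E})=\pi_{\mathrm{d}}(\boldsymbol{\theta}\mid\mathcal{E})$ and $\pi_{\mathrm{a}}(\boldsymbol{\theta}\mid\bar{\mathcal{E}})=\pi_{\mathrm{d}}(\boldsymbol{\theta}\mid\bar{\mathcal{E}})$, and let data $\mathcal{D}$ have likelihood $f(\mathcal{D}\mid\boldsymbol{\theta})$. Let $\mathcal{S}(\mathcal{D};c)=\mathbb{I}\{\Pr_{\mathrm{a}}(\mathcal{E}\mid\mathcal{D})>c\}$ and $\mathrm{PID}(c)=\Pr_{\mathrm{d}}(\bar{\mathcal{E}}\mid\mathcal{S}=1)$ under the joint model $\boldsymbol{\theta}\sim\pi_{\mathrm{d}}$, $\mathcal{D}\mid\boldsymbol{\theta}\sim f$ (assuming $\Pr_{\mathrm{d}}(\mathcal{S}=1)>0$). If $R=\frac{\Pr_{\mathrm{d}}(\mathcal{E})/\Pr_{\mathrm{d}}(\bar{\mathcal{E}})}{\Pr_{\mathrm{a}}(\mathcal{E})/\Pr_{\mathrm{a}}(\bar{\mathcal{E}})}=1$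 (which holds in particular when $\pi_{\mathrm{a}}=\pi_{\mathrm{d}}$), then $\mathrm{PID}(c)\le1-c$.
   Context: $\Pr_{\mathrm{a}}(\cdot\mid\mathcal{D})$ is the posterior under the analysis prior $\pi_{\mathrm{a}}$; $\Pr_{\mathrm{a}},\Pr_{\mathrm{d}}$ denote prior probabilities. *)

From HB Require Import structures.
From mathcomp Require Import all_boot all_order all_algebra.
From mathcomp Require Import all_classical all_reals all_analysis.
Set Implicit Arguments. Unset Strict Implicit. Unset Printing Implicit Defensive.
Import Order.TTheory GRing.Theory Num.Theory.
Import numFieldNormedType.Exports.
Local Open Scope classical_set_scope.
Local Open Scope ring_scope.

Section Defs.
Context (R : realType) (d1 d2 : measure_display)
        (T : measurableType d1) (X : measurableType d2).

Definition cond_prob (P : probability T R) (A B : set T) : R :=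
  fine (P (A `&` B)) / fine (P B).

Definition posterior (P : probability T R) (f : T -> X -> R) (A : set T) (x : X) : R :=
  fine (\int[P]_(t in A) (f t x)%:E) / fine (\int[P]_t (f t x)%:E).

Definition joint_prob (P : probability T R) (mu : {measure set X -> \bar R})
  (f : T -> X -> R) (A : set T) (B : set X) : \bar R :=
  (\int[P]_(t in A) (\int[mu]_(x in B) (f t x)%:E))%E.

Definition success_set (Pa : probability T R) (f : T -> X -> R) (E : set T) (c : R) : set X :=
  [set x | c < posterior Pa f E x].

Definition PID (Pa Pd : probability T R) (mu : {measure set X -> \bar R})
  (f : T -> X -> R) (E Ebar : set T) (c : R) : R :=
  fine (joint_prob Pd mu f Ebar (success_set Pa f E c)) /
  fine (joint_prob Pd mu f setT (success_set Pa f E c)).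

End Defs.

From HB Require Import structures.
From mathcomp Require Import all_boot all_order all_algebra.
From mathcomp Require Import all_classical all_reals all_analysis.
From mathcomp Require Import measurable_realfun.
From mathcomp Require Import ring lra.
Import Order.TTheory GRing.Theory Num.Theory.
Import numFieldNormedType.Exports.
Local Open Scope classical_set_scope.
Local Open Scope ring_scope.

(* Equal conditional priors on E and on its complement, together with equal
   prior odds of E, force the design prior to coincide with the analysis
   prior, so PID(c) is computed under the analysis prior itself.  There, by
   Tonelli, Pr(theta not in E, S = 1) integrates, over the success region, the
   unnormalised posterior mass of the complement of E; at every successful x
   the bound Pr_a(E | x) > c makes that mass at most (1 - c) times the total
   posterior mass, and integrating gives
   Pr(theta not in E, S = 1) <= (1 - c) Pr(S = 1). *)

Lemma measurable_set_ltr (R : realType) (d : measure_display)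
  (X : measurableType d) (g h : X -> R) :
  measurable_fun setT g -> measurable_fun setT h ->
  measurable [set x | g x < h x].
Proof.
move=> mg mh; have := measurable_fun_ltr mg mh measurableT (Y := [set true]) I.
by rewrite setTI.
Qed.

Section iterated_integrals.
Context {R : realType} {d1 d2 : measure_display}
  {T : measurableType d1} {X : measurableType d2} {f : T -> X -> R}.
Hypothesis mf : measurable_fun setT (fun p : T * X => f p.1 p.2).
Hypothesis f_ge0 : forall t x, 0 <= f t x.

Let fX (A : set T) (B : set X) : T * X -> \bar R :=
  (fun p => (f p.1 p.2)%:E) \_ (A `*` B).

Let measurable_fX A B : measurable A -> measurable B ->
  measurable_fun setT (fX A B).
Proof.
move=> mA mB; apply/(measurable_restrictT _ (measurableX mA mB)).
by apply: measurable_funTS; exact/measurable_EFinP.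
Qed.

Let fX_ge0 A B p : (0 <= fX A B p)%E.
Proof. by rewrite /fX /patch; case: ifP => // _; rewrite lee_fin. Qed.

Let fXE A B t x :
  fX A B (t, x) = if (t \in A) && (x \in B) then (f t x)%:E else 0%E.
Proof. by rewrite /fX /patch in_setX. Qed.

Let integral_in_fst (P : measure T R) A B x : B x ->
  (\int[P]_(t in A) (f t x)%:E = \int[P]_t fX A B (t, x))%E.
Proof.
move=> Bx; rewrite integral_mkcond; apply: eq_integral => t _.
by rewrite fXE /patch (mem_set Bx) andbT.
Qed.

Let integral_in_snd (mu : measure X R) A B t : A t ->
  (\int[mu]_(x in B) (f t x)%:E = \int[mu]_x fX A B (t, x))%E.
Proof.
move=> At; rewrite integral_mkcond; apply: eq_integral => x _.
by rewrite fXE /patch (mem_set At).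
Qed.

Lemma measurable_fun_integral_fst (P : {sigma_finite_measure set T -> \bar R})
  A : measurable A ->
  measurable_fun setT (fun x => \int[P]_(t in A) (f t x)%:E)%E.
Proof.
move=> mA; rewrite (_ : (fun x => _) = fubini_G P (fX A setT)).
  by apply: measurable_fun_fubini_tonelli_G => //; exact: measurable_fX.
by apply/funext => x; rewrite /fubini_G (integral_in_fst P A setT x I).
Qed.

Lemma integral_setX_swap (P : {sigma_finite_measure set T -> \bar R})
  (mu : {sigma_finite_measure set X -> \bar R}) A B :
  measurable A -> measurable B ->
  (\int[P]_(t in A) \int[mu]_(x in B) (f t x)%:E =
   \int[mu]_(x in B) \int[P]_(t in A) (f t x)%:E)%E.
Proof.
move=> mA mB; transitivity (\int[P]_t \int[mu]_x fX A B (t, x))%E.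
  rewrite integral_mkcond; apply: eq_integral => t _; rewrite /patch.
  case: ifPn => [/set_mem At|tA]; first exact: integral_in_snd.
  by rewrite integral0_eq// => x _; rewrite fXE (negbTE tA).
rewrite (fubini_tonelli (fX A B)) //; last exact: measurable_fX.
rewrite [RHS]integral_mkcond; apply: eq_integral => x _; rewrite /patch.
case: ifPn => [/set_mem Bx|xB]; first by rewrite (integral_in_fst P A B x Bx).
by rewrite integral0_eq// => t _; rewrite fXE (negbTE xB) andbF.
Qed.

End iterated_integrals.

Lemma odds_ratio_eq1 {F : fieldType} (p q a b : F) :
  p + q = 1 -> a + b = 1 -> p / q / (a / b) = 1 -> p = a.
Proof.
move=> pq1 ab1; rewrite invf_div => odds1.
have : p / q * (b / a) != 0 by rewrite odds1 oner_neq0.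
rewrite !mulf_eq0 !invr_eq0 => /norP[/norP[_ q0] /norP[_ a0]].
have cross : p * b = a * q by rewrite -[RHS]mulr1 -odds1; field; rewrite a0.
have qE : q = 1 - p by rewrite -pq1 addrC addKr.
have bE : b = 1 - a by rewrite -ab1 addrC addKr.
apply/eqP; rewrite -subr_eq0.
have -> : p - a = p * b - a * q by rewrite qE bE; ring.
by rewrite cross subrr.
Qed.

Lemma lt_divr_ge0E (R : realFieldType) (c a b : R) : 0 < c -> 0 <= b ->
  (c < a / b) = (0 < b) && (c * b < a).
Proof.
move=> c0; rewrite le_eqVlt => /predU1P[<-|b0]; last by rewrite b0 ltr_pdivlMr.
by rewrite ltxx invr0 mulr0 ltNge (ltW c0).
Qed.

Lemma lee_sub_of_lt_ratio (R : realFieldType) (c : R) (a e : \bar R) :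
  0 < c -> (0 <= a)%E -> (0 <= e)%E -> c < fine a / fine (a + e) ->
  (e <= (1 - c)%:E * (a + e))%E.
Proof.
move=> c0; case: a => [a| |] //; case: e => [e| |] //= a0 e0.
2-4: by rewrite ?mul0r ?invr0 ?mulr0 ltNge (ltW c0).
rewrite lee_fin in a0 e0; rewrite lt_divr_ge0E ?addr_ge0 // => /andP[_ cae].
by rewrite -EFinD -EFinM lee_fin; lra.
Qed.

Lemma fine_ratio_le (R : realFieldType) (k : R) (n d : \bar R) :
  0 <= k -> (0 <= n)%E -> (n <= k%:E * d)%E -> fine n / fine d <= k.
Proof.
move=> k0; case: d => [d| |] /=; rewrite ?invr0 ?mulr0 // => n0 nkd.
have [d0|d0] := leP d 0.
  by rewrite (le_trans _ k0)// mulr_ge0_le0 ?invr_le0 ?fine_ge0.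
rewrite ler_pdivrMr // -lee_fin fineK //.
by rewrite ge0_fin_numE // (le_lt_trans nkd) // -EFinM ltry.
Qed.

Section posterior_calibration.
Context {R : realType} {d1 d2 : measure_display}
  {T : measurableType d1} {X : measurableType d2}
  (mu : {sigma_finite_measure set X -> \bar R}) {f : T -> X -> R}.
Hypothesis mf : measurable_fun setT (fun p : T * X => f p.1 p.2).
Hypothesis f_ge0 : forall t x, 0 <= f t x.
Context (P : probability T R) (E : set T) (c : R).
Hypotheses (mE : measurable E) (c_gt0 : 0 < c) (c_lt1 : c < 1).

Let mCE : measurable (~` E) := measurableC mE.

Let integral_f_ge0 A x : (0 <= \int[P]_(t in A) (f t x)%:E)%E.
Proof. by apply: integral_ge0 => t _; rewrite lee_fin. Qed.

Let measurable_fun_integral A : measurable A ->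
  measurable_fun setT (fun x => \int[P]_(t in A) (f t x)%:E)%E.
Proof. exact: (measurable_fun_integral_fst mf f_ge0). Qed.

Lemma measurable_success_set : measurable (success_set P f E c).
Proof.
pose F A x := fine (\int[P]_(t in A) (f t x)%:E)%E.
have mF A : measurable A -> measurable_fun setT (F A).
  move=> mA; apply: measurableT_comp; first exact: fine_measurable.
  exact: measurable_fun_integral.
have -> : success_set P f E c =
    [set x | 0 < F setT x] `&` [set x | c * F setT x < F E x].
  apply/seteqP; split => x; rewrite /success_set /posterior /=;
    rewrite lt_divr_ge0E ?fine_ge0 ?integral_f_ge0 //.
  - by move/andP.
  - by move=> [-> ->].
apply: measurableI; apply: measurable_set_ltr; try exact: mF.
- exact: measurable_cst.
- exact: measurable_funM (measurable_cst c) (mF _ measurableT).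
Qed.

Lemma integral_setC_success_le x : success_set P f E c x ->
  (\int[P]_(t in ~` E) (f t x)%:E <= (1 - c)%:E * \int[P]_t (f t x)%:E)%E.
Proof.
have integral_split : (\int[P]_t (f t x)%:E =
    \int[P]_(t in E) (f t x)%:E + \int[P]_(t in ~` E) (f t x)%:E)%E.
  rewrite -{1}(setUv E) ge0_integral_setU ?setUv //.
  - exact/measurable_EFinP/(measurable_fun_pair1 x mf).
  - by move=> t _; rewrite lee_fin.
  - exact/disj_setPCl.
move=> success_x; rewrite integral_split.
by apply: lee_sub_of_lt_ratio; rewrite ?integral_f_ge0 -?integral_split.
Qed.

Lemma joint_prob_setC_success_le :
  (joint_prob P mu f (~` E) (success_set P f E c) <=
   (1 - c)%:E * joint_prob P mu f setT (success_set P f E c))%E.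
Proof.
have mS := measurable_success_set.
have mS_integral A : measurable A ->
    measurable_fun (success_set P f E c)
      (fun x => \int[P]_(t in A) (f t x)%:E)%E.
  by move=> mA; exact/measurable_funTS/measurable_fun_integral.
rewrite /joint_prob !(integral_setX_swap mf f_ge0) // -ge0_integralZl //.
- apply: ge0_le_integral => //.
  + exact: mS_integral.
  + by apply: measurable_funeM; exact: mS_integral.
  + exact: integral_setC_success_le.
- exact: mS_integral.
- by rewrite lee_fin subr_ge0 ltW.
Qed.

Lemma PID_same_prior_le : PID P P mu f E (~` E) c <= 1 - c.
Proof.
apply: fine_ratio_le; last exact: joint_prob_setC_success_le.
- by rewrite subr_ge0 ltW.
- by apply: integral_ge0 => t _; apply: integral_ge0 => x _; rewrite lee_fin.
Qed.

End posterior_calibration.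

Section prior_agreement.
Context {R : realType} {d : measure_display} {T : measurableType d}.
Implicit Types (P Q : probability T R) (A B E : set T).

Lemma fine_probability_setC P A : measurable A ->
  fine (P A) + fine (P (~` A)) = 1.
Proof.
move=> mA; rewrite probability_setC // fineB ?fin_num_measure //.
by rewrite addrC subrK.
Qed.

Lemma measureI_eq_of_cond_prob P Q A B : measurable A -> measurable B ->
  fine (P B) = fine (Q B) -> fine (Q B) != 0 ->
  cond_prob P A B = cond_prob Q A B -> P (A `&` B) = Q (A `&` B).
Proof.
move=> mA mB PQB QB0; rewrite /cond_prob PQB => /(mulIf (invr_neq0 QB0)) PQAB.
have mAB := measurableI _ _ mA mB.
by rewrite -[LHS]fineK ?fin_num_measure // -[RHS]fineK ?fin_num_measure // PQAB.
Qed.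

Lemma eq_probability_of_cond_prob P Q E : measurable E ->
  (0 < Q E)%E -> (0 < Q (~` E))%E -> fine (P E) = fine (Q E) ->
  (forall A, measurable A -> cond_prob P A E = cond_prob Q A E) ->
  (forall A, measurable A -> cond_prob P A (~` E) = cond_prob Q A (~` E)) ->
  forall A, measurable A -> P A = Q A.
Proof.
move=> mE QE_gt0 QCE_gt0 PQE condE condCE A mA.
have mCE := measurableC mE.
have fine_neq0 B : measurable B -> (0 < Q B)%E -> fine (Q B) != 0.
  move=> mB QB; rewrite gt_eqF // fine_gt0 // QB /=.
  by rewrite ltey_eq fin_num_measure.
have PQCE : fine (P (~` E)) = fine (Q (~` E)).
  apply: (addrI (fine (P E))).
  by rewrite fine_probability_setC // PQE fine_probability_setC.
have mAE := measurableI _ _ mA mE; have mACE := measurableI _ _ mA mCE.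
have disj : (A `&` E) `&` (A `&` ~` E) = set0 by rewrite setIACA setICr setI0.
rewrite -(setIT A) -(setUv E) setIUr !measureU //.
by congr (_ + _)%E; apply: measureI_eq_of_cond_prob;
  rewrite ?fine_neq0 ?condE ?condCE.
Qed.

End prior_agreement.

Theorem corollary1 (R : realType) (d1 d2 : measure_display)
  (T : measurableType d1) (X : measurableType d2)
  (theta : T -> R) (delta c : R)
  (pa pd : probability T R)
  (mu : {sigma_finite_measure set X -> \bar R})
  (f : T -> X -> R) :
  measurable_fun setT theta ->
  0 < c < 1 ->
  (* likelihood: a jointly measurable family of probability densities w.r.t. mu *)
  measurable_fun setT (fun p : T * X => f p.1 p.2) ->
  (forall t x, 0 <= f t x) ->
  (forall t, (\int[mu]_x (f t x)%:E = 1)%E) ->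
  let E := [set t | delta < theta t] in
  let Ebar := [set t | theta t <= delta] in
  (0 < pa E)%E -> (0 < pa Ebar)%E -> (0 < pd E)%E -> (0 < pd Ebar)%E ->
  (forall A, measurable A -> cond_prob pa A E = cond_prob pd A E) ->
  (forall A, measurable A -> cond_prob pa A Ebar = cond_prob pd A Ebar) ->
  (0 < joint_prob pd mu f setT (success_set pa f E c))%E ->
  (fine (pd E) / fine (pd Ebar)) / (fine (pa E) / fine (pa Ebar)) = 1 ->
  PID pa pd mu f E Ebar c <= 1 - c.
Proof.
move=> mtheta /andP[c_gt0 c_lt1] mf f_ge0 _ E Ebar _ _ pdE_gt0 pdEbar_gt0
  condE condEbar _ odds1.
have mE : measurable E.
  by apply: measurable_set_ltr => //; exact: measurable_cst.
have EbarE : Ebar = ~` E.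
  by apply/seteqP; split => t; rewrite /E /Ebar /= ltNge;
    case: (theta t <= delta).
rewrite EbarE in pdEbar_gt0 condEbar odds1 *.
have paE_pdE : fine (pa E) = fine (pd E).
  by symmetry; apply: odds_ratio_eq1 odds1; exact: fine_probability_setC.
have pa_pd := eq_probability_of_cond_prob pa pd E mE
  pdE_gt0 pdEbar_gt0 paE_pdE condE condEbar.
have -> : PID pa pd mu f E (~` E) c = PID pa pa mu f E (~` E) c.
  rewrite /PID /joint_prob; congr (fine _ / fine _);
    by apply: eq_measure_integral => A mA _; exact/esym/pa_pd.
exact: PID_same_prior_le.
Qed.
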